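(* Consider an execution of the MBBA protocol (described in the context) in which fewer than $n/3$ of the $n$ players are malicious. If, at some step, an honest player $i$ sets $f_{i,c}=1$ for some component $c\in\{1,\dots,m\}$, then $c$-agreement holds at the end of that step.
   Context: Network model: $n$ players; every pair is joined by a direct private channel; synchronous steps, instantaneous delivery. Fewer than $n/3$ players are malicious (arbitrary behaviour); honest players follow the protocol and send the same message to every player. For player $i$, step $s$, component $c$ and value $v$, $\#_i^s(v,c)$ is the number of distinct players from which $i$ received in step $s$ a valid vector message whose $c$-th component is $v$ (counting $i$'s own); conflicting messages from one sender in one step are both discarded, duplicates count once. $c$-agreement holds (at a given moment) if there is a value $v$ such that the $c$-th component $b_{j,c}$ of every honest player $j$'s current vector equals $v$. Protocol MBBA: $H$ is a hash function modeled as a random oracle (outputs ordered lexicographically); $\mathrm{SIG}_i$ is a unique-signature scheme with publicly known keys; $r$ a common random string; counter $\gamma$ starts at 0. Player $i$ holds $\mathbf{b}_i\in\{0,1\}^m$ and $\mathbf{f}_i$, initially all zeros. EXIT CHECK: if $\mathbf{f}_i$ is all ones, $i$ sends $\mathbf{b}_i$ marked final (treated by receivers as $i$'s message in all later steps), outputs $\mathbf{b}_i$ and halts. STEP 1: $i$ sends $\mathbf{b}_i$; for each $c$ with $f_{i,c}=0$: if $\#_i^1(0,c)>\frac23 n$, set $b_{i,c}=0$, $f_{i,c}=1$, perform EXIT CHECK; else if $\#_i^1(1,c)>\frac23n$, set $b_{i,c}=1$; else $b_{i,c}=0$. STEP 2: $i$ sends $\mathbf{b}_i$; for each $c$ with $f_{i,c}=0$: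 if $\#_i^2(1,c)>\frac23 n$, set $b_{i,c}=1$, $f_{i,c}=1$, perform EXIT CHECK; else if $\#_i^2(0,c)>\frac23n$, set $b_{i,c}=0$; else $b_{i,c}=1$. STEP 3: $i$ sends $s_i=\mathrm{SIG}_i(r\|\gamma)$ and $\mathbf{b}_i$; for each $c$ with $f_{i,c}=0$: if $\#_i^3(0,c)>\frac23n$, $b_{i,c}=0$; else if $\#_i^3(1,c)>\frac23n$, $b_{i,c}=1$; else $b_{i,c}=k_c$, the $c$-th bit of $k=H(\min_{j\in P_i}H(s_j))$ where $P_i$ is the set of players who sent $i$ a valid STEP 3 message. Then $\gamma\leftarrow\gamma+1$ and return to STEP 1. *)

From mathcomp Require Import all_boot.
Set Implicit Arguments. Unset Strict Implicit. Unset Printing Implicit Defensive.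

(* Players are 'I_n, components are 'I_m (0-based), vectors are 'I_m -> bool.
   Global step counter t : nat; the protocol step executed at time t is
   STEP 1 if t %% 3 = 0, STEP 2 if t %% 3 = 1, STEP 3 if t %% 3 = 2.
   State (b t j, f t j) is player j's state at the beginning of time t
   (= end of time t.-1). *)

(* #_i^s(v,c): number of distinct senders whose (valid, non-conflicting)
   message received by i has c-th component v.  msg j = None means that
   nothing valid (or conflicting messages, discarded) was received from j. *)
Definition count_recv (n m : nat) (msg : 'I_n -> option ('I_m -> bool))
    (c : 'I_m) (v : bool) : nat :=
  #|[set j : 'I_n | if msg j is Some w then w c == v else false]|.

Definition supermaj (n k : nat) : bool := 2 * n < 3 * k.

(* Update of the pair (b_{i,c}, f_{i,c}) by an honest player at time t,
   given the counting function cnt v = #_i^s(v,c) and the common-coin bit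
   k_c used in STEP 3. Components with f_{i,c} = 1 are not touched
   (this also covers halted players, whose state never changes). *)
Definition mbba_update (t n : nat) (cnt : bool -> nat) (coin : bool)
    (b f : bool) : bool * bool :=
  if f then (b, f) else
  match t %% 3 with
  | 0 => if supermaj n (cnt false) then (false, true)
         else if supermaj n (cnt true) then (true, false)
         else (false, false)
  | 1 => if supermaj n (cnt true) then (true, true)
         else if supermaj n (cnt false) then (false, false)
         else (true, false)
  | _ => (if supermaj n (cnt false) then false
          else if supermaj n (cnt true) then true
          else coin, false)
  end.

(* An execution of MBBA with honest set [honest]:
   - f starts all zeros (b 0 is the arbitrary input vector);
   - every honest sender j delivers its current vector b t j to every player
     (a halted player's final message is its fixed vector, which is again
     b t j); malicious senders' deliveries recv t i j are arbitrary;
   - every honest player updates according to MBBA; coin t i is the coin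
     vector k used by i at time t (only relevant in STEP 3), left arbitrary. *)
Definition mbba_execution (n m : nat) (honest : {set 'I_n})
    (b f : nat -> 'I_n -> 'I_m -> bool)
    (recv : nat -> 'I_n -> 'I_n -> option ('I_m -> bool))
    (coin : nat -> 'I_n -> 'I_m -> bool) : Prop :=
  [/\ forall j c, f 0 j c = false,
      forall t i j, i \in honest -> j \in honest -> recv t i j = Some (b t j)
    & forall t i c, i \in honest ->
        (b t.+1 i c, f t.+1 i c) =
        mbba_update t n (count_recv (recv t i) c) (coin t i c)
                    (b t i c) (f t i c)].

Definition c_agreement (n m : nat) (honest : {set 'I_n})
    (b : nat -> 'I_n -> 'I_m -> bool) (t : nat) (c : 'I_m) : Prop :=
  exists v : bool, forall j, j \in honest -> b t j c = v.

(* An honest player fixes [c] only on seeing a supermajority (> 2n/3) for the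
   value [v] of that step.  Since fewer than n/3 players are malicious, two
   supermajorities for opposite values cannot coexist, so in that step no
   honest player sees one for [~~ v], and MBBA's update rule then makes every
   honest player adopt [v].  Once all honest players agree, every honest
   player sees a supermajority for the common value and none for its negation,
   so agreement persists; by induction, a component already fixed by some
   honest player is always agreed upon. *)

From mathcomp Require Import all_boot.
From mathcomp Require Import zify.

Set Implicit Arguments.
Unset Strict Implicit.
Unset Printing Implicit Defensive.

Lemma mbba_update_unanimous t n cnt coin v fv :
  supermaj n (cnt v) -> ~~ supermaj n (cnt (~~ v)) ->
  (mbba_update t n cnt coin v fv).1 = v.
Proof.
rewrite /mbba_update; case: fv => //.
by case: (t %% 3) => [|[|?]]; case: v => /= h /negbTE h'; rewrite ?h ?h'.
Qed.

(* [t %% 3 == 1] is the only value a player can fix at time [t]: [false] in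
   STEP 1, [true] in STEP 2. *)
Lemma mbba_update_fix_step t n cnt coin bv :
  (mbba_update t n cnt coin bv false).2 ->
  (t %% 3 < 2) && supermaj n (cnt (t %% 3 == 1)).
Proof.
rewrite /mbba_update.
by case: (t %% 3) => [|[|?]] /=; do 2?case: ifP.
Qed.

Lemma mbba_update_lock t n cnt coin bv :
  t %% 3 < 2 -> ~~ supermaj n (cnt (~~ (t %% 3 == 1))) ->
  (mbba_update t n cnt coin bv false).1 = (t %% 3 == 1).
Proof.
rewrite /mbba_update.
by case: (t %% 3) => [|[|?]] //= _ /negbTE ->; case: ifP.
Qed.

Section Quorums.

Variables (n m : nat) (honest : {set 'I_n}) (bt : 'I_n -> 'I_m -> bool).
Variable c : 'I_m.

Definition honest_delivery (msg : 'I_n -> option ('I_m -> bool)) : Prop :=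
  forall j, j \in honest -> msg j = Some (bt j).

Definition honest_votes (v : bool) : nat :=
  #|[set j in honest | bt j c == v]|.

Lemma honest_votesC v : honest_votes v + honest_votes (~~ v) = #|honest|.
Proof.
rewrite -(cardsID [set j | bt j c == v] honest); congr (_ + _).
all: by apply: eq_card => j; rewrite !inE; case: (bt j c); case: v; rewrite ?andbT ?andbF.
Qed.

Lemma honest_votes_le_count msg v :
  honest_delivery msg -> honest_votes v <= count_recv msg c v.
Proof.
move=> msg_honest; apply: subset_leq_card; apply/subsetP => j.
by rewrite !inE => /andP[hj]; rewrite msg_honest.
Qed.

Lemma count_le_honest_votes msg v :
  honest_delivery msg -> count_recv msg c v <= honest_votes v + #|~: honest|.
Proof.
move=> msg_honest; apply: leq_trans (leq_card_setU _ _).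
apply: subset_leq_card; apply/subsetP => j; rewrite !inE.
by case: (boolP (j \in honest)) => //= hj; rewrite msg_honest // orbF.
Qed.

Hypothesis resilient : 3 * #|~: honest| < n.

Lemma supermaj_unanimous msg v :
  honest_delivery msg -> (forall j, j \in honest -> bt j c = v) ->
  supermaj n (count_recv msg c v) && ~~ supermaj n (count_recv msg c (~~ v)).
Proof.
move=> msg_honest all_v.
have all_votes : honest_votes v = #|honest|.
  by apply: eq_card => j; rewrite !inE andb_idr // => /all_v ->.
have := honest_votesC v; have := honest_votes_le_count v msg_honest.
have := count_le_honest_votes (~~ v) msg_honest; have := cardsC honest.
rewrite card_ord all_votes /supermaj; lia.
Qed.

Lemma supermaj_exclusive msg msg' v :
  honest_delivery msg -> honest_delivery msg' ->
  supermaj n (count_recv msg c v) -> ~~ supermaj n (count_recv msg' c (~~ v)).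
Proof.
move=> msg_honest msg'_honest.
have := count_le_honest_votes v msg_honest; have := honest_votesC v.
have := count_le_honest_votes (~~ v) msg'_honest; have := cardsC honest.
rewrite card_ord /supermaj; lia.
Qed.

End Quorums.

Section Execution.

Variables (n m : nat) (honest : {set 'I_n}) (b f : nat -> 'I_n -> 'I_m -> bool).
Variables (recv : nat -> 'I_n -> 'I_n -> option ('I_m -> bool))
          (coin : nat -> 'I_n -> 'I_m -> bool).

Hypothesis resilient : 3 * #|~: honest| < n.
Hypothesis f_init : forall j c, f 0 j c = false.
Hypothesis recv_honest :
  forall t i j, i \in honest -> j \in honest -> recv t i j = Some (b t j).
Hypothesis honest_step : forall t i c, i \in honest ->
  (b t.+1 i c, f t.+1 i c) =
  mbba_update t n (count_recv (recv t i) c) (coin t i c) (b t i c) (f t i c).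

Lemma honest_delivery_recv t i :
  i \in honest -> honest_delivery honest (b t) (recv t i).
Proof. by move=> hi j; apply: recv_honest. Qed.

Lemma agreement_persists t c v :
  (forall j, j \in honest -> b t j c = v) ->
  forall j, j \in honest -> b t.+1 j c = v.
Proof.
move=> all_v j hj.
have /andP[sv nsv] := supermaj_unanimous resilient (honest_delivery_recv t hj) all_v.
have /(congr1 fst)/= -> := honest_step t c hj.
by rewrite all_v //; apply: mbba_update_unanimous.
Qed.

Lemma first_fix_agreement t c i :
  i \in honest -> (forall j, j \in honest -> f t j c = false) ->
  f t.+1 i c -> c_agreement honest b t.+1 c.
Proof.
move=> hi unfixed fixed.
have /andP[step sv] : (t %% 3 < 2) && supermaj n (count_recv (recv t i) c (t %% 3 == 1)).
  apply: mbba_update_fix_step (coin t i c) (b t i c) _.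
  by rewrite -(unfixed i hi) -(honest_step t c hi).
exists (t %% 3 == 1) => j hj.
have /(congr1 fst)/= -> := honest_step t c hj.
rewrite unfixed //; apply: mbba_update_lock step _.
exact: (supermaj_exclusive resilient (honest_delivery_recv t hi) (honest_delivery_recv t hj) sv).
Qed.

Lemma fixed_component_agreement t c i :
  i \in honest -> f t i c -> forall j, j \in honest -> b t j c = b t i c.
Proof.
elim: t i => [|t IH] i hi; first by rewrite f_init.
move=> fixed; suff [v all_v] : c_agreement honest b t.+1 c.
  by move=> j hj; rewrite !all_v.
have [/exists_inP[j hj fj] | /exists_inPn unfixed] := boolP [exists j in honest, f t j c].
- by exists (b t j c); apply: agreement_persists; apply: IH.
- by apply: first_fix_agreement hi _ fixed => j hj; apply/negbTE/unfixed.
Qed.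

End Execution.

Theorem lemma1 (n m : nat) (honest : {set 'I_n})
    (b f : nat -> 'I_n -> 'I_m -> bool)
    (recv : nat -> 'I_n -> 'I_n -> option ('I_m -> bool))
    (coin : nat -> 'I_n -> 'I_m -> bool) :
  3 * #|~: honest| < n ->
  mbba_execution honest b f recv coin ->
  forall (t : nat) (i : 'I_n) (c : 'I_m),
    i \in honest -> f t i c = false -> f t.+1 i c = true ->
    c_agreement honest b t.+1 c.
Proof.
move=> resilient [f_init recv_honest honest_step] t i c hi _ fixed.
exists (b t.+1 i c).
exact: fixed_component_agreement resilient f_init recv_honest honest_step _ _ _ hi fixed.
Qed.
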